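(* Let $\theta\in[\pi/4,\pi/3)$, $o=(0,0)$, $p=(1,0)$, and let $\mathbb{R}^2_-=\{(x,y)\mid y\leq 0\}$. Let $u,v\in\mathbb{R}^2_-$ be points with $0<x_u<1$, $|\varphi(uv)-\pi|<\pi/6$, and $|ou|,|pv|\in[|uv|,1)$. Define $$\mathcal{T}'=u+|uv|\,\mathrm{Rot}_{\varphi(uv)}\big(\mathcal{T}_\theta^-\big).$$ Then $\mathcal{T}'\setminus\mathcal{T}_\theta\subseteq\mathbb{R}^2_-$.
   Context: The curved trapezoid is the open set $\mathcal{T}_\theta=\{(x,y)\mid 0<x<1,\ 0<y<\sin\theta,\ x^2+y^2<1,\ (x-1)^2+y^2<1\}$. For a set $\mathcal{O}\subset\mathbb{R}^2$: $\mathcal{O}^-$ is its reflection through the $x$-axis; $\mathrm{Rot}_{\gamma}(\mathcal{O})$ is its rotation by angle $\gamma$ counterclockwise about the origin; $\lambda\mathcal{O}=\{\lambda z\mid z\in\mathcal{O}\}$; $u+\mathcal{O}=\{u+z\mid z\in\mathcal{O}\}$. $x_u$ denotes the $x$-coordinate of $u$, and $\varphi(uv)$ is the polar angle (from the positive $x$-axis, modulo $2\pi$) of the vector $\overrightarrow{uv}$. *)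

From Stdlib Require Import Reals.
Open Scope R_scope.

Definition pt := (R * R)%type.
Definition region := pt -> Prop.

Definition curved_trapezoid (theta : R) : region := fun z =>
  let x := fst z in let y := snd z in
  0 < x < 1 /\ 0 < y < sin theta /\ x ^ 2 + y ^ 2 < 1 /\ (x - 1) ^ 2 + y ^ 2 < 1.

Definition reflect_x (O : region) : region := fun z => O (fst z, - snd z).

Definition rot_pt (g : R) (w : pt) : pt :=
  (cos g * fst w - sin g * snd w, sin g * fst w + cos g * snd w).

Definition Rot (g : R) (O : region) : region := fun z => exists w, O w /\ z = rot_pt g w.

Definition scale (l : R) (O : region) : region :=
  fun z => exists w, O w /\ z = (l * fst w, l * snd w).

Definition translate (u : pt) (O : region) : region :=
  fun z => exists w, O w /\ z = (fst u + fst w, snd u + snd w).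

Definition pdist (u v : pt) : R := sqrt ((fst v - fst u) ^ 2 + (snd v - snd u) ^ 2).

(* polar angle in [0, 2*PI) of the nonzero vector (a,b) *)
Definition polar_angle (a b : R) : R :=
  let r := sqrt (a ^ 2 + b ^ 2) in
  if Rle_dec 0 b then acos (a / r) else 2 * PI - acos (a / r).

Definition phi (u v : pt) : R := polar_angle (fst v - fst u) (snd v - snd u).

From Stdlib Require Import Reals Lra Psatz.
Open Scope R_scope.

(* The similarity maps o to u and p to v, so a point z of T' in the upper
   half-plane is closer to u than u is to o, and closer to v than v is to p.
   Since u and v lie in the lower half-plane, this confines z to the lens
   x^2 + y^2 < 1, (x - 1)^2 + y^2 < 1 between the verticals x = 0 and x = 1;
   its height is at most |uv| < 1 times the height of its preimage in T_theta.
   The condition on phi(uv) only serves to put v left of u, so that x_v < 1. *)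

Lemma polar_angle_cos_sin (a b : R) :
  sqrt (a ^ 2 + b ^ 2) * cos (polar_angle a b) = a /\
  sqrt (a ^ 2 + b ^ 2) * sin (polar_angle a b) = b.
Proof.
  unfold polar_angle; pose proof (sqrt_pos (a ^ 2 + b ^ 2)).
  set (r := sqrt (a ^ 2 + b ^ 2)) in *.
  assert (Hrr : r * r = a ^ 2 + b ^ 2) by (apply sqrt_sqrt; nra).
  destruct (Req_dec r 0) as [Hr0 | Hr0].
  { rewrite Hr0 in *; split; nra. }
  assert (Hr : 0 < r) by lra.
  assert (Hcos : -1 <= a / r <= 1).
  { split; apply (Rmult_le_reg_r r); trivial; unfold Rdiv;
      rewrite Rmult_assoc, Rinv_l; nra. }
  assert (Hsin : sqrt (1 - (a / r)²) = Rabs b / r).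
  { replace (1 - (a / r)²) with ((b / r)²)
      by (unfold Rsqr; field_simplify_eq; lra).
    rewrite sqrt_Rsqr_abs; unfold Rdiv.
    rewrite Rabs_mult, Rabs_inv, (Rabs_right r); lra. }
  destruct (Rle_dec 0 b).
  - rewrite cos_acos, sin_acos, Hsin, Rabs_right by (trivial || lra).
    split; field; lra.
  - rewrite cos_minus, sin_minus, cos_2PI, sin_2PI, cos_acos, sin_acos, Hsin,
      Rabs_left by (trivial || lra).
    split; field; lra.
Qed.

Lemma phi_near_pi_fst_le (u v : pt) :
  Rabs (phi u v - PI) < PI / 2 -> fst v <= fst u.
Proof.
  intros Hphi; apply Rabs_def2 in Hphi.
  assert (Hcos : cos (phi u v) < 0) by (apply cos_lt_0; lra).
  destruct (polar_angle_cos_sin (fst v - fst u) (snd v - snd u)) as [Hdx _].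
  fold (phi u v) in Hdx.
  pose proof (sqrt_pos ((fst v - fst u) ^ 2 + (snd v - snd u) ^ 2)).
  nra.
Qed.

Lemma reflected_similarity_coords (O : region) (u v z : pt) :
  translate u (scale (pdist u v) (Rot (phi u v) (reflect_x O))) z ->
  exists a b, O (a, b) /\
    z = (fst u + a * (fst v - fst u) + b * (snd v - snd u),
         snd u + a * (snd v - snd u) - b * (fst v - fst u)).
Proof.
  intros (w & (w' & (w'' & HO & ->) & ->) & ->).
  destruct w'' as [a b]; unfold reflect_x in HO; simpl in HO.
  exists a, (- b); split; [exact HO |].
  destruct (polar_angle_cos_sin (fst v - fst u) (snd v - snd u)) as [Hc Hs].
  unfold pdist, rot_pt; fold (phi u v) in Hc, Hs; cbn [fst snd].
  set (d := sqrt _) in *.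
  f_equal; rewrite <- Hc, <- Hs; ring.
Qed.

Lemma sqrt_le_lt_1 (x y : R) :
  0 <= x -> 0 <= y -> sqrt x <= sqrt y < 1 -> x <= y < 1.
Proof.
  intros Hx Hy [Hle Hlt]; split.
  - exact (sqrt_le_0 x y Hx Hy Hle).
  - apply sqrt_lt_0_alt; rewrite sqrt_1; exact Hlt.
Qed.

Lemma closer_than_axis_point (zx zy vx vy c : R) :
  vy <= 0 -> 0 <= zy ->
  (zx - vx) ^ 2 + (zy - vy) ^ 2 < (c - vx) ^ 2 + vy ^ 2 ->
  zx ^ 2 + zy ^ 2 - c ^ 2 < 2 * (zx - c) * vx.
Proof. intros; nra. Qed.

Lemma upper_point_in_lens (ux uy vx vy zx zy : R) :
  uy <= 0 -> vy <= 0 -> 0 < zy -> 0 < ux < 1 -> 0 <= vx <= 1 ->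
  (zx - ux) ^ 2 + (zy - uy) ^ 2 < ux ^ 2 + uy ^ 2 ->
  (zx - vx) ^ 2 + (zy - vy) ^ 2 < (1 - vx) ^ 2 + vy ^ 2 ->
  0 < zx < 1 /\ zx ^ 2 + zy ^ 2 < 1 /\ (zx - 1) ^ 2 + zy ^ 2 < 1.
Proof.
  intros Huy Hvy Hzy Hux Hvx Hu Hv.
  replace (ux ^ 2) with ((0 - ux) ^ 2) in Hu by ring.
  apply closer_than_axis_point in Hu, Hv; try lra.
  assert (Hzx0 : 0 < zx) by nra.
  assert (Hzx1 : zx < 1) by nra.
  repeat split; nra.
Qed.

Lemma similar_trapezoid_upper_point (theta ux uy vx vy a b : R) :
  uy <= 0 -> vy <= 0 -> 0 < ux < 1 -> vx <= 1 ->
  (vx - ux) ^ 2 + (vy - uy) ^ 2 <= ux ^ 2 + uy ^ 2 < 1 ->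
  (vx - ux) ^ 2 + (vy - uy) ^ 2 <= (vx - 1) ^ 2 + vy ^ 2 < 1 ->
  curved_trapezoid theta (a, b) ->
  0 < uy + a * (vy - uy) - b * (vx - ux) ->
  curved_trapezoid theta
    (ux + a * (vx - ux) + b * (vy - uy), uy + a * (vy - uy) - b * (vx - ux)).
Proof.
  unfold curved_trapezoid; cbn [fst snd].
  intros Huy Hvy Hux Hvx [Hou Hou1] [Hpv Hpv1] (Ha & Hb & Hab0 & Hab1) Hzy.
  assert (Hdd : 0 < (vx - ux) ^ 2 + (vy - uy) ^ 2).
  { destruct (Req_dec (vx - ux) 0) as [Hx | Hx];
      [destruct (Req_dec (vy - uy) 0) as [Hy | Hy] |].
    - rewrite Hx, Hy in Hzy; lra.
    - pose proof (Rsqr_pos_lt _ Hy); pose proof (pow2_ge_0 (vx - ux)).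
      unfold Rsqr in *; lra.
    - pose proof (Rsqr_pos_lt _ Hx); pose proof (pow2_ge_0 (vy - uy)).
      unfold Rsqr in *; lra. }
  remember ((vx - ux) ^ 2 + (vy - uy) ^ 2) as dd eqn:Edd.
  assert (Hvx0 : 0 <= vx) by nra.
  destruct (upper_point_in_lens ux uy vx vy
              (ux + a * (vx - ux) + b * (vy - uy))
              (uy + a * (vy - uy) - b * (vx - ux)))
    as (Hzx & Hzo & Hzp); try lra.
  - assert (Hdist : (a * (vx - ux) + b * (vy - uy)) ^ 2
                    + (a * (vy - uy) - b * (vx - ux)) ^ 2 = (a ^ 2 + b ^ 2) * dd)
      by (rewrite Edd; ring).
    nra.
  - assert (Hdist : (ux - vx + a * (vx - ux) + b * (vy - uy)) ^ 2
                    + (uy - vy + a * (vy - uy) - b * (vx - ux)) ^ 2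
                    = ((a - 1) ^ 2 + b ^ 2) * dd)
      by (rewrite Edd; ring).
    nra.
  - assert (Hshift : ux - vx < 1) by nra.
    assert (Hheight : uy + a * (vy - uy) - b * (vx - ux) <= b * (ux - vx)) by nra.
    repeat split; try lra; nra.
Qed.

Theorem lemma6 (theta : R) (u v : pt) :
  PI / 4 <= theta < PI / 3 ->
  snd u <= 0 -> snd v <= 0 ->
  0 < fst u < 1 ->
  Rabs (phi u v - PI) < PI / 6 ->
  pdist u v <= pdist (0, 0) u < 1 ->
  pdist u v <= pdist (1, 0) v < 1 ->
  forall z : pt,
    translate u (scale (pdist u v) (Rot (phi u v) (reflect_x (curved_trapezoid theta)))) z ->
    ~ curved_trapezoid theta z ->
    snd z <= 0.
Proof.
  intros _ Huy Hvy Hux Hphi Hou Hpv z Hz Hnot.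
  assert (Hvu : fst v <= fst u)
    by (apply phi_near_pi_fst_le; pose proof PI_RGT_0; lra).
  destruct (reflected_similarity_coords _ _ _ _ Hz) as (a & b & Hab & ->).
  destruct u as [ux uy], v as [vx vy]; unfold pdist in *; cbn [fst snd] in *.
  rewrite !Rminus_0_r in Hou, Hpv.
  apply sqrt_le_lt_1 in Hou, Hpv;
    try (apply Rplus_le_le_0_compat; apply pow2_ge_0).
  apply Rnot_lt_le; intros Hzy; apply Hnot.
  apply similar_trapezoid_upper_point; trivial; lra.
Qed.
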